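(* In the setting described in the context with $N_s=3M$, let $\mathbf N=[\mathbf H,\mathbf A,\dot{\mathbf A}_\theta,\dot{\mathbf A}_\phi]\in\mathbb C^{N_t\times(K+3M)}$. Then the problem $\max\{f(\mathbf W):\mathbf W\in\mathbb C^{N_t\times(K+3M)},\ \mathrm{tr}(\mathbf W\mathbf W^H)\le P_t\}$ can be reformulated as $$\max_{\mathbf P\in\mathbb C^{(K+3M)\times(K+3M)}}\ f(\mathbf N\mathbf P)\quad\text{s.t.}\quad \mathrm{tr}(\mathbf P\mathbf P^H\mathbf N^H\mathbf N)\le P_t,$$ i.e., the two problems have the same optimal value, and $\mathbf W=\mathbf N\mathbf P$ is optimal for the former whenever $\mathbf P$ is optimal for the latter.
   Context: Positive integers $N_t,N_r,K,M,L$; channels $\mathbf h_k\in\mathbb C^{N_t}$, $\mathbf H=[\mathbf h_1,\dots,\mathbf h_K]$, noise variances $\sigma_{ck}^2>0$; $\sigma_s^2>0$; weights $\delta_c,\delta_s\ge0$; $P_t>0$. $\mathbf W=[\mathbf W_c,\mathbf W_s]$ with $\mathbf W_c=[\mathbf w_{c1},\dots,\mathbf w_{cK}]\in\mathbb C^{N_t\times K}$, $\mathbf W_s\in\mathbb C^{N_t\times N_s}$, $\mathbf R_x=\mathbf W\mathbf W^H$. Rate $R_k(\mathbf W)=\log\big(1+\frac{|\mathbf h_k^H\mathbf w_{ck}|^2}{\sum_{j\ne k}|\mathbf h_k^H\mathbf w_{cj}|^2+\|\mathbf h_k^H\mathbf W_s\|_F^2+\sigma_{ck}^2}\big)$. Sensing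 model: differentiable $\mathbf a:\mathbb R^2\to\mathbb C^{N_t}$, $\mathbf b:\mathbb R^2\to\mathbb C^{N_r}$; parameters $\theta_m,\phi_m\in\mathbb R,\alpha_m\in\mathbb C$; $\mathbf A=[\mathbf a(\theta_m,\phi_m)]_m$, $\mathbf B=[\mathbf b(\theta_m,\phi_m)]_m$, $\mathbf U=\mathrm{diag}(\alpha_m)$; $\dot{\mathbf A}_\theta,\dot{\mathbf A}_\phi,\dot{\mathbf B}_\theta,\dot{\mathbf B}_\phi$ have $m$-th columns the partial derivatives of $\mathbf a$ resp. $\mathbf b$ w.r.t. first resp. second argument at $(\theta_m,\phi_m)$. $\mathbf F(\mathbf W)=\frac{2L}{\sigma_s^2}\begin{bmatrix}\Re\mathbf F_{11}&\Re\mathbf F_{12}&\Re\mathbf F_{13}&-\Im\mathbf F_{13}\\ \Re\mathbf F_{12}^{\mathsf T}&\Re\mathbf F_{22}&\Re\mathbf F_{23}&-\Im\mathbf F_{23}\\ \Re\mathbf F_{13}^{\mathsf T}&\Re\mathbf F_{23}^{\mathsf T}&\Re\mathbf F_{33}&-\Im\mathbf F_{33}\\ -\Im\mathbf F_{13}^{\mathsf T}&-\Im\mathbf F_{23}^{\mathsf T}&-\Im\mathbf F_{33}^{\mathsf T}&\Re\mathbf F_{33}\end{bmatrix}$ with $\mathbf F_{11}=(\mathbf U\mathbf A^H\mathbf R_x\mathbf A\mathbf U^H)^{\mathsf T}\odot(\dot{\mathbf B}_\theta^H\dot{\mathbf B}_\theta)+(\mathbf U\mathbf A^H\mathbf R_x\dot{\mathbf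 A}_\theta\mathbf U^H)^{\mathsf T}\odot(\mathbf B^H\dot{\mathbf B}_\theta)+(\mathbf U\dot{\mathbf A}_\theta^H\mathbf R_x\mathbf A\mathbf U^H)^{\mathsf T}\odot(\dot{\mathbf B}_\theta^H\mathbf B)+(\mathbf U\dot{\mathbf A}_\theta^H\mathbf R_x\dot{\mathbf A}_\theta\mathbf U^H)^{\mathsf T}\odot(\mathbf B^H\mathbf B)$; $\mathbf F_{12}=(\mathbf U\mathbf A^H\mathbf R_x\mathbf A\mathbf U^H)^{\mathsf T}\odot(\dot{\mathbf B}_\theta^H\dot{\mathbf B}_\phi)+(\mathbf U\mathbf A^H\mathbf R_x\dot{\mathbf A}_\theta\mathbf U^H)^{\mathsf T}\odot(\mathbf B^H\dot{\mathbf B}_\phi)+(\mathbf U\dot{\mathbf A}_\phi^H\mathbf R_x\mathbf A\mathbf U^H)^{\mathsf T}\odot(\dot{\mathbf B}_\theta^H\mathbf B)+(\mathbf U\dot{\mathbf A}_\phi^H\mathbf R_x\dot{\mathbf A}_\theta\mathbf U^H)^{\mathsf T}\odot(\mathbf B^H\mathbf B)$; $\mathbf F_{22}$ = $\mathbf F_{11}$ with $\theta\to\phi$; $\mathbf F_{13}=(\mathbf A^H\mathbf R_x\mathbf A\mathbf U^H)^{\mathsf T}\odot(\dot{\mathbf B}_\theta^H\mathbf B)+(\mathbf A^H\mathbf R_x\dot{\mathbf A}_\theta\mathbf U^H)^{\mathsf T}\odot(\mathbf B^H\mathbf B)$; $\mathbf F_{23}$ = $\mathbf F_{13}$ with $\theta\to\phi$;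 $\mathbf F_{33}=(\mathbf A^H\mathbf R_x\mathbf A)^{\mathsf T}\odot(\mathbf B^H\mathbf B)$ ($\odot$ Hadamard). $f(\mathbf W)=\delta_c\sum_{k=1}^KR_k(\mathbf W)-\delta_s\mathrm{tr}(\mathbf F(\mathbf W)^{-1})$ (considered where $\mathbf F(\mathbf W)$ is invertible). *)

From HB Require Import structures.
From mathcomp Require Import all_boot all_order all_algebra.
From mathcomp Require Import all_classical all_reals all_analysis.
From mathcomp.real_closed Require Import complex.
Set Implicit Arguments. Unset Strict Implicit. Unset Printing Implicit Defensive.
Import Order.TTheory GRing.Theory Num.Theory.
Local Open Scope ring_scope.
Local Open Scope complex_scope.

Section ISAC.
Variable R : realType.
Local Notation C := R[i].

Definition adjmx m n (X : 'M[C]_(m, n)) : 'M[C]_(n, m) := (map_mx (@conjc R) X)^T.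
Definition hadmx m n (X Y : 'M[C]_(m, n)) : 'M[C]_(m, n) := \matrix_(i, j) (X i j * Y i j).
Definition remx m n (X : 'M[C]_(m, n)) : 'M[R]_(m, n) := map_mx (@complex.Re R) X.
Definition immx m n (X : 'M[C]_(m, n)) : 'M[R]_(m, n) := map_mx (@complex.Im R) X.
Definition sqnc (z : C) : R := complex.Re z ^+ 2 + complex.Im z ^+ 2.

Definition partial1 (g : R * R -> R) (p : R * R) : R := derive1 (fun t => g (t, p.2)) p.1.
Definition partial2 (g : R * R -> R) (p : R * R) : R := derive1 (fun t => g (p.1, t)) p.2.

Definition cpartial1 (g : R * R -> C) (p : R * R) : C :=
  (partial1 (fun q => complex.Re (g q)) p) +i* (partial1 (fun q => complex.Im (g q)) p).
Definition cpartial2 (g : R * R -> C) (p : R * R) : C :=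
  (partial2 (fun q => complex.Re (g q)) p) +i* (partial2 (fun q => complex.Im (g q)) p).

Definition steer n M (a : 'I_n -> R * R -> C) (th ph : 'I_M -> R) : 'M[C]_(n, M) :=
  \matrix_(i, m) a i (th m, ph m).
Definition steer_dth n M (a : 'I_n -> R * R -> C) (th ph : 'I_M -> R) : 'M[C]_(n, M) :=
  \matrix_(i, m) cpartial1 (a i) (th m, ph m).
Definition steer_dph n M (a : 'I_n -> R * R -> C) (th ph : 'I_M -> R) : 'M[C]_(n, M) :=
  \matrix_(i, m) cpartial2 (a i) (th m, ph m).

Variables (Nt Nr K M L : nat).
Local Notation Ns := (M + (M + M))%N.

(* Achievable rate of user k;  W = [W_c, W_s],  W_c = lsubmx W, W_s = rsubmx W *)
Definition rate (H : 'M[C]_(Nt, K)) (sigc : 'I_K -> R)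
  (W : 'M[C]_(Nt, K + Ns)) (k : 'I_K) : R :=
  let G := adjmx H *m lsubmx W in
  let S := adjmx H *m rsubmx W in
  ln (1 + sqnc (G k k) /
      (\sum_(j < K | j != k) sqnc (G k j) + \sum_(j < Ns) sqnc (S k j) + sigc k ^+ 2)).

Section Fisher.
Variables (A Ath Aph : 'M[C]_(Nt, M)) (B Bth Bph : 'M[C]_(Nr, M)) (U : 'M[C]_M).
Variable Rx : 'M[C]_Nt.

Definition Fgen (a1 : 'M[C]_(Nt, M)) (b1 : 'M[C]_(Nr, M))
                (a2 : 'M[C]_(Nt, M)) (b2 : 'M[C]_(Nr, M)) : 'M[C]_M :=
  hadmx (U *m adjmx A *m Rx *m A *m adjmx U)^T (adjmx b1 *m b2)
  + hadmx (U *m adjmx A *m Rx *m a1 *m adjmx U)^T (adjmx B *m b2)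
  + hadmx (U *m adjmx a2 *m Rx *m A *m adjmx U)^T (adjmx b1 *m B)
  + hadmx (U *m adjmx a2 *m Rx *m a1 *m adjmx U)^T (adjmx B *m B).

Definition F11 := Fgen Ath Bth Ath Bth.
Definition F12 := Fgen Ath Bth Aph Bph.
Definition F22 := Fgen Aph Bph Aph Bph.
Definition F3gen (a : 'M[C]_(Nt, M)) (b : 'M[C]_(Nr, M)) : 'M[C]_M :=
  hadmx (adjmx A *m Rx *m A *m adjmx U)^T (adjmx b *m B)
  + hadmx (adjmx A *m Rx *m a *m adjmx U)^T (adjmx B *m B).
Definition F13 := F3gen Ath Bth.
Definition F23 := F3gen Aph Bph.
Definition F33 := hadmx (adjmx A *m Rx *m A)^T (adjmx B *m B).

(* the 4M x 4M real matrix, block rows (theta, phi, Re alpha, Im alpha) *)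
Definition Fblock : 'M[R]_((M + M) + (M + M)) :=
  block_mx
    (block_mx (remx F11) (remx F12) (remx F12)^T (remx F22))
    (block_mx (remx F13) (- immx F13) (remx F23) (- immx F23))
    (block_mx (remx F13)^T (remx F23)^T (- immx F13)^T (- immx F23)^T)
    (block_mx (remx F33) (- immx F33) (- immx F33)^T (remx F33)).
End Fisher.

Definition Umx (alpha : 'I_M -> C) : 'M[C]_M := diag_mx (\row_m alpha m).

Definition FIM (a : 'I_Nt -> R * R -> C) (b : 'I_Nr -> R * R -> C)
  (th ph : 'I_M -> R) (alpha : 'I_M -> C) (sigs2 : R) (W : 'M[C]_(Nt, K + Ns))
  : 'M[R]_((M + M) + (M + M)) :=
  ((2 * L%:R) / sigs2) *:
  Fblock (steer a th ph) (steer_dth a th ph) (steer_dph a th ph)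
         (steer b th ph) (steer_dth b th ph) (steer_dph b th ph)
         (Umx alpha) (W *m adjmx W).

Definition fobj (H : 'M[C]_(Nt, K)) (sigc : 'I_K -> R)
  (a : 'I_Nt -> R * R -> C) (b : 'I_Nr -> R * R -> C)
  (th ph : 'I_M -> R) (alpha : 'I_M -> C) (sigs2 dc ds : R)
  (W : 'M[C]_(Nt, K + Ns)) : R :=
  dc * (\sum_(k < K) rate H sigc W k) - ds * \tr (invmx (FIM a b th ph alpha sigs2 W)).

End ISAC.

(* Everything in f(W) depends on W only through the products X^H W, X a column
   block of N = [H, A, dA_theta, dA_phi]: the rates through H^H W, the Fisher
   matrix through the Gram terms X^H (W W^H) Y = (X^H W)(Y^H W)^H.  Solving the
   normal equations N^H (W - N P) = 0 therefore gives N P with the same objective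
   and Fisher matrix as W, and since the residual W - N P is orthogonal to the
   columns of N, Pythagoras shows that N P uses no more power than W. *)
From HB Require Import structures.
From mathcomp Require Import all_boot all_order all_algebra.
From mathcomp Require Import all_classical all_reals all_analysis.
From mathcomp.real_closed Require Import complex.
Set Implicit Arguments. Unset Strict Implicit. Unset Printing Implicit Defensive.
Import Order.TTheory GRing.Theory Num.Theory.
Import numFieldNormedType.Exports.
Local Open Scope ring_scope.
Local Open Scope complex_scope.

Section Reparametrization.
Variables (R : realType) (T S : Type) (f : T -> R) (g : S -> T).
Variables (D1 : set T) (D2 : set S).
Hypothesis g_feasible : forall y, D2 y -> D1 (g y).
Hypothesis g_covers : forall x, D1 x -> exists2 y, D2 y & f x = f (g y).

Lemma ereal_sup_reparam :
  ereal_sup [set (f x)%:E | x in D1] = ereal_sup [set (f (g y))%:E | y in D2].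
Proof.
congr ereal_sup; apply/seteqP; split => _ [x Dx <-].
  by have [y D2y ->] := g_covers Dx; exists y.
by exists (g x) => //; exact: g_feasible.
Qed.

Lemma argmax_reparam y : D2 y -> (forall y', D2 y' -> f (g y') <= f (g y)) ->
  D1 (g y) /\ (forall x, D1 x -> f x <= f (g y)).
Proof.
move=> D2y ymax; split; first exact: g_feasible.
by move=> x /g_covers [y' D2y' ->]; exact: ymax.
Qed.
End Reparametrization.

Section Adjoint.
Variable R : realType.
Local Notation C := R[i].

Lemma adjmxK m n (X : 'M[C]_(m, n)) : adjmx (adjmx X) = X.
Proof. by apply/matrixP => i j; rewrite /adjmx !mxE conjcK. Qed.

Lemma adjmx0 m n : adjmx (0 : 'M[C]_(m, n)) = 0.
Proof. by apply/matrixP => i j; rewrite /adjmx !mxE conjc0. Qed.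

Lemma adjmxD m n (X Y : 'M[C]_(m, n)) : adjmx (X + Y) = adjmx X + adjmx Y.
Proof. by rewrite /adjmx map_mxD linearD. Qed.

Lemma adjmxM m n p (X : 'M[C]_(m, n)) (Y : 'M[C]_(n, p)) :
  adjmx (X *m Y) = adjmx Y *m adjmx X.
Proof. by rewrite /adjmx map_mxM trmx_mul. Qed.

Lemma adjmx_row m n1 n2 (X : 'M[C]_(m, n1)) (Y : 'M[C]_(m, n2)) :
  adjmx (row_mx X Y) = col_mx (adjmx X) (adjmx Y).
Proof. by rewrite /adjmx map_row_mx tr_row_mx. Qed.

Lemma mxtrace_mul_adjmx m n (X : 'M[C]_(m, n)) :
  \tr (X *m adjmx X) = \sum_i \sum_j `|X i j| ^+ 2.
Proof.
apply: eq_bigr => i _; rewrite mxE; apply: eq_bigr => j _.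
by rewrite /adjmx !mxE sqr_normc.
Qed.

Lemma mxtrace_mul_adjmx_ge0 m n (X : 'M[C]_(m, n)) : 0 <= \tr (X *m adjmx X).
Proof.
by rewrite mxtrace_mul_adjmx; do 2![apply: sumr_ge0 => ? _]; exact: exprn_ge0.
Qed.

Lemma mxtrace_mul_adjmx_eq0 m n (X : 'M[C]_(m, n)) :
  \tr (X *m adjmx X) = 0 -> X = 0.
Proof.
have sq_ge0 i : 0 <= \sum_j `|X i j| ^+ 2 by apply: sumr_ge0 => j _; exact: exprn_ge0.
rewrite mxtrace_mul_adjmx => /eqP; rewrite psumr_eq0 // => /allP rowX0.
apply/matrixP => i j; rewrite mxE.
move: (rowX0 i (mem_index_enum i)); rewrite psumr_eq0 => [/allP|k _]; last exact: exprn_ge0.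
by move=> /(_ j (mem_index_enum j)); rewrite expf_eq0 normr_eq0 => /eqP.
Qed.

Lemma mxtrace_gram_mulmx n p q (N : 'M[C]_(n, p)) (P : 'M[C]_(p, q)) :
  \tr (N *m P *m adjmx (N *m P)) = \tr (P *m adjmx P *m adjmx N *m N).
Proof. by rewrite adjmxM -!mulmxA mxtrace_mulC !mulmxA. Qed.

(* If (N^H N)^T v = 0 then x := (N^H)^T v satisfies N^T x = 0, so
   x^H x = v^H (N^T x) = 0 and x = 0. *)
Lemma normal_equations_solvable n p q (N : 'M[C]_(n, p)) (W : 'M[C]_(n, q)) :
  exists P : 'M[C]_(p, q), adjmx N *m (W - N *m P) = 0.
Proof.
suff sub_gram : ((adjmx N)^T <= (adjmx N *m N)^T)%MS.
  have : ((adjmx N *m W)^T <= (adjmx N *m N)^T)%MS.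
    by rewrite trmx_mul; apply: submx_trans sub_gram; exact: submxMl.
  case/submxP => P defP; exists P^T.
  by rewrite mulmxBr mulmxA -[adjmx N *m W]trmxK defP trmx_mul trmxK subrr.
rewrite submxE; set X := (adjmx N)^T *m cokermx (adjmx N *m N)^T.
have NX0 : N^T *m X = 0 by rewrite /X mulmxA -trmx_mul mulmx_coker.
have adjX : adjmx X = adjmx (cokermx (adjmx N *m N)^T) *m N^T.
  by rewrite /X adjmxM; congr (_ *m _); apply/matrixP => i j; rewrite !mxE conjcK.
apply/eqP/mxtrace_mul_adjmx_eq0.
by rewrite mxtrace_mulC adjX -mulmxA NX0 mulmx0 mxtrace0.
Qed.

Lemma mxtrace_gram_orth_le m n (X E : 'M[C]_(m, n)) :
  adjmx X *m E = 0 -> \tr (X *m adjmx X) <= \tr ((X + E) *m adjmx (X + E)).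
Proof.
move=> XE0.
have EX0 : adjmx E *m X = 0 by rewrite -[X]adjmxK -adjmxM XE0 adjmx0.
have cross1 : \tr (X *m adjmx E) = 0 by rewrite mxtrace_mulC EX0 mxtrace0.
have cross2 : \tr (E *m adjmx X) = 0 by rewrite mxtrace_mulC XE0 mxtrace0.
rewrite adjmxD mulmxDl !mulmxDr !mxtraceD cross1 cross2 addr0 add0r.
by rewrite lerDl mxtrace_mul_adjmx_ge0.
Qed.

Lemma adjmx_gram_congr n m p q (X : 'M[C]_(n, m)) (Y : 'M[C]_(n, p))
    (W1 W2 : 'M[C]_(n, q)) :
  adjmx X *m W1 = adjmx X *m W2 -> adjmx Y *m W1 = adjmx Y *m W2 ->
  adjmx X *m (W1 *m adjmx W1) *m Y = adjmx X *m (W2 *m adjmx W2) *m Y.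
Proof.
have gram (W : 'M[C]_(n, q)) :
    adjmx X *m (W *m adjmx W) *m Y = (adjmx X *m W) *m adjmx (adjmx Y *m W).
  by rewrite adjmxM adjmxK !mulmxA.
by rewrite !gram => -> ->.
Qed.
End Adjoint.

Section ObjectiveCongruence.
Variables (R : realType) (Nt Nr K M L : nat).
Local Notation C := R[i].
Local Notation Ns := (M + (M + M))%N.
Variables (H : 'M[C]_(Nt, K)) (sigc : 'I_K -> R) (sigs2 dc ds : R).
Variables (a : 'I_Nt -> R * R -> C) (b : 'I_Nr -> R * R -> C).
Variables (th ph : 'I_M -> R) (alpha : 'I_M -> C).
Variables W1 W2 : 'M[C]_(Nt, K + Ns).

Lemma rate_congr k : adjmx H *m W1 = adjmx H *m W2 ->
  rate H sigc W1 k = rate H sigc W2 k.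
Proof. by rewrite /rate !mulmx_lsub !mulmx_rsub => ->. Qed.

Lemma Fblock_congr (Rx1 Rx2 : 'M[C]_Nt) (A Ath Aph : 'M[C]_(Nt, M))
    {B Bth Bph : 'M[C]_(Nr, M)} {U : 'M[C]_M} :
  (forall X Y, X \in [:: A; Ath; Aph] -> Y \in [:: A; Ath; Aph] ->
     adjmx X *m Rx1 *m Y = adjmx X *m Rx2 *m Y) ->
  Fblock A Ath Aph B Bth Bph U Rx1 = Fblock A Ath Aph B Bth Bph U Rx2.
Proof.
move=> eRx; have memA : A \in [:: A; Ath; Aph] by rewrite mem_head.
have memAth : Ath \in [:: A; Ath; Aph] by rewrite !inE eqxx orbT.
have memAph : Aph \in [:: A; Ath; Aph] by rewrite !inE eqxx !orbT.
rewrite /Fblock /F11 /F12 /F22 /F13 /F23 /F33 /Fgen /F3gen -!(mulmxA U).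
by rewrite ?(eRx _ _ memA memA) ?(eRx _ _ memA memAth) ?(eRx _ _ memA memAph)
  ?(eRx _ _ memAth memA) ?(eRx _ _ memAph memA) ?(eRx _ _ memAth memAth)
  ?(eRx _ _ memAph memAth) ?(eRx _ _ memAph memAph).
Qed.

Lemma fobj_FIM_congr :
  let N := row_mx H (row_mx (steer a th ph)
             (row_mx (steer_dth a th ph) (steer_dph a th ph))) in
  adjmx N *m W1 = adjmx N *m W2 ->
  fobj L H sigc a b th ph alpha sigs2 dc ds W1 =
    fobj L H sigc a b th ph alpha sigs2 dc ds W2 /\
  FIM L a b th ph alpha sigs2 W1 = FIM L a b th ph alpha sigs2 W2.
Proof.
rewrite /= !adjmx_row !mul_col_mx.
move=> /eq_col_mx [eH /eq_col_mx [eA /eq_col_mx [eAth eAph]]].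
have eF : FIM L a b th ph alpha sigs2 W1 = FIM L a b th ph alpha sigs2 W2.
  have eX X : X \in [:: steer a th ph; steer_dth a th ph; steer_dph a th ph] ->
      adjmx X *m W1 = adjmx X *m W2.
    by rewrite !inE => /or3P[]/eqP->; [exact: eA | exact: eAth | exact: eAph].
  have gram X Y : X \in [:: steer a th ph; steer_dth a th ph; steer_dph a th ph] ->
      Y \in [:: steer a th ph; steer_dth a th ph; steer_dph a th ph] ->
      adjmx X *m (W1 *m adjmx W1) *m Y = adjmx X *m (W2 *m adjmx W2) *m Y.
    by move=> /eX eX1 /eX eY1; exact: adjmx_gram_congr eX1 eY1.
  by rewrite /FIM (Fblock_congr gram).
split; last exact: eF.
by rewrite /fobj eF (eq_bigr _ (fun k _ => rate_congr k eH)).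
Qed.
End ObjectiveCongruence.

Local Open Scope classical_set_scope.

Theorem proposition5 (R : realType) (Nt Nr K M L : nat)
  (H : 'M[R[i]]_(Nt, K)) (sigc : 'I_K -> R) (sigs2 dc ds Pt : R)
  (a : 'I_Nt -> R * R -> R[i]) (b : 'I_Nr -> R * R -> R[i])
  (th ph : 'I_M -> R) (alpha : 'I_M -> R[i]) :
  (0 < Nt)%N -> (0 < Nr)%N -> (0 < K)%N -> (0 < M)%N -> (0 < L)%N ->
  (forall k, 0 < sigc k ^+ 2) -> 0 < sigs2 -> 0 <= dc -> 0 <= ds -> 0 < Pt ->
  (forall i (p : R * R), differentiable (fun q => complex.Re (a i q)) p /\
                         differentiable (fun q => complex.Im (a i q)) p) ->
  (forall i (p : R * R), differentiable (fun q => complex.Re (b i q)) p /\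
                         differentiable (fun q => complex.Im (b i q)) p) ->
  let f := fobj L H sigc a b th ph alpha sigs2 dc ds in
  let F := FIM L a b th ph alpha sigs2 in
  (* N = [H, A, dA_theta, dA_phi] *)
  let N : 'M[R[i]]_(Nt, K + (M + (M + M))) :=
    row_mx H (row_mx (steer a th ph) (row_mx (steer_dth a th ph) (steer_dph a th ph))) in
  (* feasible set of the original problem (where F(W) is invertible) *)
  let D1 := [set W : 'M[R[i]]_(Nt, K + (M + (M + M))) |
              \tr (W *m adjmx W) <= Pt%:C /\ F W \in unitmx] in
  (* feasible set of the reformulated problem *)
  let D2 := [set P : 'M[R[i]]_(K + (M + (M + M))) |
              \tr (P *m adjmx P *m adjmx N *m N) <= Pt%:C /\ F (N *m P) \in unitmx] in
  ereal_sup [set (f W)%:E | W in D1] = ereal_sup [set (f (N *m P))%:E | P in D2]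
  /\ (forall P, D2 P -> (forall P', D2 P' -> f (N *m P') <= f (N *m P)) ->
        D1 (N *m P) /\ (forall W, D1 W -> f W <= f (N *m P))).
Proof.
move=> _ _ _ _ _ _ _ _ _ _ _ _ f F N D1 D2.
have D2_D1 P : D2 P -> D1 (N *m P) by rewrite /D1 /D2 /= mxtrace_gram_mulmx.
have D1_D2 W : D1 W -> exists2 P, D2 P & f W = f (N *m P).
  move=> [powW unitW]; have [P normalP] := normal_equations_solvable N W.
  have sameNW : adjmx N *m W = adjmx N *m (N *m P).
    by apply/eqP; rewrite -subr_eq0 -mulmxBr normalP.
  have [fW FW] : f W = f (N *m P) /\ F W = F (N *m P) :=
    fobj_FIM_congr L sigc sigs2 dc ds b alpha sameNW.
  exists P; last exact: fW.
  split; last by rewrite -FW.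
  apply: le_trans powW; rewrite -mxtrace_gram_mulmx -[W in X in _ <= X](subrKC (N *m P)).
  by apply: mxtrace_gram_orth_le; rewrite adjmxM -mulmxA normalP mulmx0.
split; first exact: ereal_sup_reparam.
exact: argmax_reparam.
Qed.
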